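(* Let $J$ be a real symmetric $n\times n$ matrix with pairwise distinct eigenvalues, and consider the Euler–Arnold equations $$\dot M = [M,\Omega],\qquad M = \Omega J + J\Omega,$$ where $M\in\mathfrak{so}(n)$ and $\Omega\in\mathfrak{so}(n)$ is the unique skew-symmetric matrix with $\Omega J + J\Omega = M$. Then $M$ is an equilibrium point of this system if and only if there exists an orthonormal basis of $\mathbb{R}^n$ in which $J$ is diagonal and $\Omega$ is block-diagonal of the form $$\Omega = \operatorname{diag}\bigl(\omega_1 A_1,\ \dots,\ \omega_k A_k,\ 0,\ \dots,\ 0\bigr),$$ where, for each $i=1,\dots,k$, $A_i\in \mathfrak{so}(2m_i)\cap \mathrm{SO}(2m_i)$ for some integer $m_i>0$, and $\omega_1,\dots,\omega_k$ are pairwise distinct positive real numbers. Moreover, this form of $\Omega$ is unique up to a permutation of the blocks.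
   Context: $\mathfrak{so}(m)$ denotes the space of real skew-symmetric $m\times m$ matrices and $\mathrm{SO}(m)$ the group of real orthogonal $m\times m$ matrices of determinant $1$; $[X,Y]=XY-YX$. The linear map $\Omega\mapsto \Omega J + J\Omega$ is invertible on $\mathfrak{so}(n)$, so $\Omega$ is determined by $M$. An equilibrium point means a point $M$ with $[M,\Omega]=0$. In the block form, the trailing zero entries form a zero block (possibly empty), and $k\ge 0$. *)

From HB Require Import structures.
From mathcomp Require Import all_boot all_order all_algebra.
From mathcomp Require Import reals.
Set Implicit Arguments. Unset Strict Implicit. Unset Printing Implicit Defensive.
Import Order.TTheory GRing.Theory Num.Theory.
Local Open Scope ring_scope.

Section Defs.
Variable R : realType.

Definition lie_bracket n (X Y : 'M[R]_n) : 'M[R]_n := X *m Y - Y *m X.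

Definition skew_mx n (X : 'M[R]_n) : Prop := X^T = - X.
Definition symmetric_mx n (X : 'M[R]_n) : Prop := X^T = X.
Definition orthogonal_mx n (P : 'M[R]_n) : Prop := P^T *m P = 1%:M.
Definition special_orthogonal n (X : 'M[R]_n) : Prop :=
  orthogonal_mx X /\ \det X = 1.

(* J has pairwise distinct eigenvalues: n distinct eigenvalues (each of
   algebraic multiplicity one) *)
Definition distinct_eigenvalues n (J : 'M[R]_n) : Prop :=
  exists d : 'I_n -> R, injective d /\ forall i, eigenvalue J (d i).

Definition block_form n k (m : 'I_k -> nat) (w : 'I_k -> R)
    (A : forall i : 'I_k, 'M[R]_((m i).*2)) z
    (e : (\sum_(i < k) (m i).*2 + z)%N = n) : 'M[R]_n :=
  castmx (e, e) (block_mx (\mxdiag_(i < k) (w i *: A i)) 0 0 (0 : 'M[R]_z)).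

Definition normal_form n (J Om : 'M[R]_n) k (m : 'I_k -> nat) (w : 'I_k -> R)
  : Prop :=
  exists (A : forall i : 'I_k, 'M[R]_((m i).*2)) (z : nat)
         (e : (\sum_(i < k) (m i).*2 + z)%N = n) (P : 'M[R]_n),
    orthogonal_mx P /\
    is_diag_mx (P^T *m J *m P) /\
    (forall i, 0 < m i)%N /\
    (forall i, 0 < w i) /\
    injective w /\
    (forall i, skew_mx (A i) /\ special_orthogonal (A i)) /\
    P^T *m Om *m P = block_form w A e.

End Defs.

From HB Require Import structures.
From mathcomp Require Import all_boot all_order all_algebra all_fingroup.
From mathcomp Require Import boolp reals.
From mathcomp Require Import ring zify.
Set Implicit Arguments. Unset Strict Implicit. Unset Printing Implicit Defensive.
Import Order.TTheory GRing.Theory Num.Theory.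
Local Open Scope ring_scope.

(* Substituting M = Om J + J Om gives [M, Om] = J Om^2 - Om^2 J, so M is an
   equilibrium iff Om^2 commutes with J.  As J has simple spectrum, this means
   that Om^2 is diagonal in an orthonormal eigenbasis of J, which we reorder so
   that the diagonal of Om^2 increases.  The skew matrix T representing Om then
   commutes with the diagonal matrix T^2, so it only couples coordinates on which
   T^2 takes the same value -w^2: T is block diagonal, and on a block with w > 0
   the matrix A = T / w is skew with A^2 = -1, hence orthogonal, of determinant 1
   and of even size.  Conversely such an Om has Om^2 diagonal in that basis.  The
   normal form is unique because the blocks of frequency w have total size
   n - rank (Om^2 + w^2), which does not depend on the basis. *)

(* Matrices of different (only propositionally equal) sizes are compared
   through their coefficients at natural-number indices, zero outside the
   matrix; this sidesteps the casts between 'M_(p + q) and 'M_n. *)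
Section NatIndexedCoefficients.
Variable R : pzRingType.

Definition coefn p q (X : 'M[R]_(p, q)) (a b : nat) : R :=
  match insub a : option 'I_p, insub b : option 'I_q with
  | Some i, Some j => X i j
  | _, _ => 0
  end.

Lemma coefnE p q (X : 'M[R]_(p, q)) (i : 'I_p) (j : 'I_q) : coefn X i j = X i j.
Proof. by rewrite /coefn !valK. Qed.

Lemma coefn_outl p q (X : 'M[R]_(p, q)) a b : (p <= a)%N -> coefn X a b = 0.
Proof. by move=> pa; rewrite /coefn insubF // ltnNge pa. Qed.

Lemma coefn_outr p q (X : 'M[R]_(p, q)) a b : (q <= b)%N -> coefn X a b = 0.
Proof.
by move=> qb; rewrite /coefn; case: (insub a) => // i; rewrite insubF // ltnNge qb.
Qed.

Lemma coefn_ind p q (X : 'M[R]_(p, q)) (P : nat -> nat -> R -> Prop) :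
  (forall a b, (p <= a)%N || (q <= b)%N -> P a b 0) ->
  (forall (i : 'I_p) (j : 'I_q), P i j (X i j)) ->
  forall a b, P a b (coefn X a b).
Proof.
move=> P0 PX a b.
case: (ltnP a p) => [ap|pa]; first case: (ltnP b q) => [bq|qb].
- by rewrite -[a]/(nat_of_ord (Ordinal ap)) -[b]/(nat_of_ord (Ordinal bq)) coefnE.
- by rewrite coefn_outr //; apply: P0; rewrite qb orbT.
by rewrite coefn_outl //; apply: P0; rewrite pa.
Qed.

Lemma coefn_inj p q : injective (@coefn p q).
Proof. by move=> X Y XY; apply/matrixP => i j; rewrite -!coefnE XY. Qed.

Lemma coefn_mx p q (f : nat -> nat -> R) a b :
  coefn (\matrix_(i < p, j < q) f i j) a b =
  if (a < p)%N && (b < q)%N then f a b else 0.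
Proof.
pose P a b x := x = if (a < p)%N && (b < q)%N then f a b else 0.
apply: (coefn_ind (P := P)) => [a' b'|i j]; rewrite /P ?ltn_ord ?mxE //.
by move=> out; rewrite ifF //; apply/negbTE; rewrite negb_and -!leqNgt.
Qed.

Lemma coefn0 p q : coefn (0 : 'M[R]_(p, q)) = fun _ _ => 0.
Proof.
apply/funext => a; apply/funext => b.
by apply: (coefn_ind (P := fun _ _ x => x = 0)) => // i j; rewrite mxE.
Qed.

Lemma coefn_diag n (X : 'M[R]_n) a b : is_diag_mx X -> a != b -> coefn X a b = 0.
Proof.
move=> /is_diag_mxP diagX; move: a b.
by apply: (coefn_ind (P := fun a b x => a != b -> x = 0)) => // i j; apply: diagX.
Qed.

Lemma coefn_castmx p q p' q' (e : (p = p') * (q = q')) (X : 'M[R]_(p, q)) :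
  coefn (castmx e X) = coefn X.
Proof. by case: e => ep eq; case: p' / ep; case: q' / eq; rewrite castmx_id. Qed.

Lemma coefnZ p q c (X : 'M[R]_(p, q)) a b : coefn (c *: X) a b = c * coefn X a b.
Proof.
case: (ltnP a p) => [ap|pa]; last by rewrite !coefn_outl // mulr0.
case: (ltnP b q) => [bq|qb]; last by rewrite !coefn_outr // mulr0.
by rewrite -[a]/(nat_of_ord (Ordinal ap)) -[b]/(nat_of_ord (Ordinal bq)) !coefnE mxE.
Qed.

Definition bdiag (r : nat) (f g : nat -> nat -> R) a b :=
  if (a < r)%N then (if (b < r)%N then f a b else 0)
  else (if (b < r)%N then 0 else g (a - r)%N (b - r)%N).

Lemma bdiagA r s f g h : bdiag r f (bdiag s g h) = bdiag (r + s) (bdiag r f g) h.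
Proof.
apply/funext => a; apply/funext => b; rewrite /bdiag.
do ! case: ifP => ?; try lia; try done.
by rewrite !subnDA.
Qed.

Lemma bdiag0 r : bdiag r (fun _ _ => 0) (fun _ _ => 0) = fun _ _ => 0.
Proof. by apply/funext => a; apply/funext => b; rewrite /bdiag; do ! case: ifP. Qed.

Lemma coefn_block_diag p q (X : 'M[R]_p) (Y : 'M[R]_q) :
  coefn (block_mx X 0 0 Y) = bdiag p (coefn X) (coefn Y).
Proof.
apply/funext => a; apply/funext => b; rewrite /bdiag.
case: (ltnP a (p + q)) => [apq|pqa]; last first.
  rewrite coefn_outl //; case: ifP => [ap|_]; first lia.
  by case: ifP => // _; rewrite coefn_outl //; lia.
case: (ltnP b (p + q)) => [bpq|pqb]; last first.
  by rewrite coefn_outr //; do 2 case: ifP => ? //; rewrite coefn_outr //; lia.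
have [i ->] : exists i : 'I_(p + q), a = i by exists (Ordinal apq).
have [j ->] : exists j : 'I_(p + q), b = j by exists (Ordinal bpq).
rewrite coefnE; case: split_ordP => i' ->; case: split_ordP => j' ->.
- by rewrite block_mxEul coefnE.
- by rewrite block_mxEur mxE.
- by rewrite block_mxEdl mxE.
by rewrite block_mxEdr /= !addKn coefnE.
Qed.

Lemma coefn_mxdiag0 (p : 'I_0 -> nat) (B : forall i, 'M[R]_(p i)) :
  coefn (\mxdiag_i B i) = fun _ _ => 0.
Proof. by apply/funext => a; apply/funext => b; rewrite coefn_outl // big_ord0. Qed.

Lemma coefn_mxdiag_recl k (p : 'I_k.+1 -> nat) (B : forall i, 'M[R]_(p i)) :
  coefn (\mxdiag_i B i) =
  bdiag (p ord0) (coefn (B ord0)) (coefn (\mxdiag_i B (lift ord0 i))).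
Proof. by rewrite mxdiag_recl coefn_castmx coefn_block_diag. Qed.

Lemma eq_coefn_mxdiag k (p p' : 'I_k -> nat) (B : forall i, 'M[R]_(p i))
    (B' : forall i, 'M[R]_(p' i)) :
  (forall i, p i = p' i) -> (forall i, coefn (B i) = coefn (B' i)) ->
  coefn (\mxdiag_i B i) = coefn (\mxdiag_i B' i).
Proof.
elim: k p p' B B' => [|k IHk] p p' B B' pp' BB'; first by rewrite !coefn_mxdiag0.
rewrite !coefn_mxdiag_recl; congr bdiag; [exact: pp' | exact: BB' |].
by apply: IHk => i; rewrite ?pp' ?BB'.
Qed.

Lemma mx_coefn p q (e : q = p) (Y : 'M[R]_q) :
  \matrix_(a < p, b < p) coefn Y a b = castmx (e, e) Y.
Proof. by case: p / e; apply/matrixP => i j; rewrite mxE coefnE castmx_id. Qed.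

Lemma castmx_mul p q (e : p = q) (X Y : 'M[R]_p) :
  castmx (e, e) X *m castmx (e, e) Y = castmx (e, e) (X *m Y).
Proof. by case: q / e; rewrite !castmx_id. Qed.

Lemma coefn_split n r (X : 'M[R]_n) (rn : (r <= n)%N) :
  (forall a b, (a < r <= b)%N -> coefn X a b = 0 /\ coefn X b a = 0) ->
  exists (X1 : 'M[R]_r) (X2 : 'M[R]_(n - r)),
    X = castmx (subnKC rn, subnKC rn) (block_mx X1 0 0 X2).
Proof.
move=> off; exists (\matrix_(a < r, b < r) coefn X a b).
exists (\matrix_(a < n - r, b < n - r) coefn X (r + a) (r + b)).
apply: coefn_inj; rewrite coefn_castmx coefn_block_diag.
apply/funext => a; apply/funext => b.
rewrite /bdiag coefn_mx (coefn_mx _ _ (fun a b => coefn X (r + a) (r + b))).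
case: (ltnP a r) => ar; case: (ltnP b r) => br /=.
- by [].
- by case: (off a b) => //; rewrite ar br.
- by case: (off b a) => //; rewrite ar br.
rewrite !subnKC //; case: ifP => // /negbT; rewrite negb_and -!leqNgt.
by case/orP => ?; [rewrite coefn_outl // | rewrite coefn_outr //]; lia.
Qed.

End NatIndexedCoefficients.

Section DiagonalAndBlockDiagonal.
Variable R : idomainType.

Lemma commute_diag_entry n (X D : 'M[R]_n) i j :
  is_diag_mx D -> X *m D = D *m X -> X i j * (D j j - D i i) = 0.
Proof.
case/diag_mxP=> d -> /matrixP/(_ i j).
rewrite mul_mx_diag mul_diag_mx !mxE !eqxx !mulr1n => XdD.
by rewrite mulrBr XdD mulrC subrr.
Qed.

Lemma diag_mx_commute n (D E : 'M[R]_n) :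
  is_diag_mx D -> is_diag_mx E -> D *m E = E *m D.
Proof. by case/diag_mxP=> d -> /diag_mxP[e ->]; apply: diag_mxC. Qed.

Lemma commute_diag_distinct n (X D : 'M[R]_n) :
  is_diag_mx D -> (forall i j, i != j -> D i i != D j j) ->
  X *m D = D *m X -> is_diag_mx X.
Proof.
move=> diagD distD XD; apply/is_diag_mxP => i j ij; apply/eqP.
have /eqP := commute_diag_entry i j diagD XD.
by rewrite mulf_eq0 subr_eq0 (negbTE (distD j i _)) ?orbF // eq_sym.
Qed.

Lemma mxdiag_mul k (p : 'I_k -> nat) (B C : forall i, 'M[R]_(p i)) :
  \mxdiag_i B i *m \mxdiag_i C i = \mxdiag_i (B i *m C i).
Proof.
elim: k p B C => [|k IHk] p B C.
  by apply/matrixP => -[i lt_i]; exfalso; move: lt_i; rewrite big_ord0.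
by rewrite !mxdiag_recl castmx_mul mulmx_block !mulmx0 !mul0mx !addr0 !add0r IHk.
Qed.

Lemma castmx_block_diag_mul p q n (e : (p + q)%N = n)
    (X1 Y1 : 'M[R]_p) (X2 Y2 : 'M[R]_q) :
  castmx (e, e) (block_mx X1 0 0 X2) *m castmx (e, e) (block_mx Y1 0 0 Y2) =
  castmx (e, e) (block_mx (X1 *m Y1) 0 0 (X2 *m Y2)).
Proof.
by rewrite castmx_mul mulmx_block !mulmx0 !mul0mx !addr0 !add0r.
Qed.

Lemma skew_castmx_block_diag p q n (e : (p + q)%N = n)
    (X1 : 'M[R]_p) (X2 : 'M[R]_q) :
  (castmx (e, e) (block_mx X1 0 0 X2))^T = - castmx (e, e) (block_mx X1 0 0 X2) ->
  X1^T = - X1 /\ X2^T = - X2.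
Proof.
case: n / e; rewrite castmx_id tr_block_mx !trmx0 opp_block_mx !oppr0.
by case/eq_block_mx.
Qed.

End DiagonalAndBlockDiagonal.

Section SkewSquares.
Variable R : realDomainType.

Lemma skew_sqr_diagE n (X : 'M[R]_n) i :
  X^T = - X -> (X *m X) i i = - \sum_j X i j ^+ 2.
Proof.
move=> skewX; rewrite mxE -sumrN; apply: eq_bigr => j _.
have /matrixP/(_ i j) := skewX; rewrite !mxE => ->.
by rewrite mulrN expr2.
Qed.

Lemma skew_sqr_coefn_le0 n (X : 'M[R]_n) a : X^T = - X -> coefn (X *m X) a a <= 0.
Proof.
move=> skewX; case: (ltnP a n) => [an|na]; last by rewrite coefn_outl.
rewrite (_ : a = Ordinal an) // coefnE skew_sqr_diagE // oppr_le0.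
by apply: sumr_ge0 => j _; apply: sqr_ge0.
Qed.

Lemma skew_sqr_diag_eq0 n (X : 'M[R]_n) :
  X^T = - X -> (forall i, (X *m X) i i = 0) -> X = 0.
Proof.
move=> skewX diag0; apply/matrixP => i j; rewrite mxE.
have /eqP := diag0 i; rewrite skew_sqr_diagE // oppr_eq0 => /eqP sum0.
have /eqP := psumr_eq0P (P := predT) (fun l _ => sqr_ge0 (X i l)) sum0 (i := j) isT.
by rewrite sqrf_eq0 => /eqP.
Qed.

Lemma first_jump (f : nat -> R) n : (0 < n)%N ->
  (forall a b, (a <= b < n)%N -> f a <= f b) ->
  exists2 r, (0 < r <= n)%N &
    (forall a, (a < r)%N -> f a = f 0%N) /\ (forall a, (r <= a < n)%N -> f 0%N < f a).
Proof.
move=> n_gt0 f_mono; pose r := find (fun a => f a != f 0%N) (iota 0 n).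
have rn : (r <= n)%N by rewrite -[X in (_ <= X)%N](size_iota 0 n) find_size.
have before a : (a < r)%N -> f a = f 0%N.
  move=> ar; have := before_find 0%N ar.
  by rewrite nth_iota ?add0n; [move/negbFE/eqP | apply: leq_trans ar rn].
exists r; last split=> // a /andP[ra an].
  by rewrite rn andbT /r -(prednK n_gt0) /= eqxx.
have rlt : (r < n)%N by apply: leq_ltn_trans ra an.
have := nth_find 0%N (a := fun a => f a != f 0%N) (s := iota 0 n).
rewrite has_find size_iota nth_iota // add0n => /(_ rlt) fr.
apply: (lt_le_trans (y := f r)); last by apply: f_mono; rewrite ra an.
by rewrite lt_neqAle eq_sym fr f_mono ?rlt.
Qed.

Lemma skew_sqr_sorted_eq0 n (T : 'M[R]_n) :
  T^T = - T ->
  (forall a b, (a <= b < n)%N -> coefn (T *m T) a a <= coefn (T *m T) b b) ->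
  coefn (T *m T) 0 0 = 0 -> T = 0.
Proof.
move=> skewT sortedT d0; apply: skew_sqr_diag_eq0 => // i; apply/eqP.
by rewrite -coefnE eq_le skew_sqr_coefn_le0 //= -d0 sortedT ?ltn_ord.
Qed.

Lemma skew_sqrN1 p (A : 'M[R]_p) :
  A^T = - A -> A *m A = - 1%:M -> (A^T *m A = 1%:M /\ \det A = 1) /\ ~~ odd p.
Proof.
move=> skewA sqrA.
have orthA : A^T *m A = 1%:M by rewrite skewA mulNmx sqrA (opprK (1%:M : 'M[R]_p)).
(* (1 - A)(1 + A) = 2 makes 1 - A invertible; A (1 - A) = (1 - A)^T then forces det A = 1. *)
have factor2 : (1%:M - A) *m (1%:M + A) = 2%:M.
  by rewrite mulmxDr !mulmxBl !mul1mx mulmx1 sqrA addrA subrK (opprK (1%:M : 'M[R]_p)) -raddfD.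
have det_ne0 : \det (1%:M - A) != 0.
  apply: contraTneq isT => det0; have /(congr1 determinant) := factor2.
  rewrite det_mulmx det0 mul0r det_scalar => /eqP; rewrite eq_sym expf_eq0 pnatr_eq0.
  by rewrite andbF.
have detA : \det A = 1.
  have: A *m (1%:M - A) = (1%:M - A)^T.
    by rewrite mulmxBr mulmx1 sqrA (opprK (1%:M : 'M[R]_p)) linearB /= trmx1 skewA opprK addrC.
  move/(congr1 determinant); rewrite det_mulmx det_tr => /eqP.
  by rewrite -subr_eq0 -[X in _ - X]mul1r -mulrBl mulf_eq0 (negbTE det_ne0) orbF subr_eq0 => /eqP.
split=> //; apply/negP => oddp.
have := det_tr A; rewrite skewA -scaleN1r detZ detA mulr1 -signr_odd oddp expr1 => /eqP.
by rewrite eq_sym -subr_eq0 opprK -[1 + 1]/(2%:R : R) pnatr_eq0.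
Qed.

Lemma sorted_sqr_split n (T : 'M[R]_n) : (0 < n)%N -> is_diag_mx (T *m T) ->
  (forall a b, (a <= b < n)%N -> coefn (T *m T) a a <= coefn (T *m T) b b) ->
  exists r (rn : (r <= n)%N) (T1 : 'M[R]_r) (T2 : 'M[R]_(n - r)),
  [/\ (0 < r)%N, T = castmx (subnKC rn, subnKC rn) (block_mx T1 0 0 T2),
      T1 *m T1 = (coefn (T *m T) 0 0)%:M,
      forall a b, coefn (T2 *m T2) a b = coefn (T *m T) (r + a) (r + b) &
      forall a, (a < n - r)%N -> coefn (T *m T) 0 0 < coefn (T2 *m T2) a a].
Proof.
move=> n_gt0 diagT sortedT.
have [r /andP[r_gt0 rn] [before after]] :=
  first_jump (f := fun a => coefn (T *m T) a a) n_gt0 sortedT.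
(* T commutes with T *m T, so it only couples indices where T *m T agrees. *)
have sep a b : coefn (T *m T) a a != coefn (T *m T) b b -> coefn T a b = 0.
  move: a b; apply: (coefn_ind
    (P := fun a b x => coefn (T *m T) a a != coefn (T *m T) b b -> x = 0)) => // i j.
  rewrite !coefnE => neq; apply/eqP.
  move/eqP: (commute_diag_entry i j diagT (mulmxA T T T)).
  by rewrite mulf_eq0 subr_eq0 [X in _ || X]eq_sym (negbTE neq) orbF.
have off a b : (a < r <= b)%N -> coefn T a b = 0 /\ coefn T b a = 0.
  case/andP=> ar rb; case: (ltnP b n) => [bn|nb]; last by rewrite coefn_outr ?coefn_outl.
  have lt_ab : coefn (T *m T) a a < coefn (T *m T) b b by rewrite before // after ?rb.
  by split; apply: sep; rewrite ?(lt_eqF lt_ab) ?(gt_eqF lt_ab).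
have [T1 [T2 defT]] := coefn_split rn off.
have sqrT : coefn (T *m T) = bdiag r (coefn (T1 *m T1)) (coefn (T2 *m T2)).
  by rewrite defT castmx_block_diag_mul coefn_castmx coefn_block_diag.
have sqrT2 a b : coefn (T2 *m T2) a b = coefn (T *m T) (r + a) (r + b).
  by rewrite sqrT /bdiag !ltnNge !leq_addr /= !addKn.
exists r, rn, T1, T2; split=> // [|a an].
  apply/matrixP => i j; rewrite -coefnE mxE.
  have -> : coefn (T1 *m T1) i j = coefn (T *m T) i j by rewrite sqrT /bdiag !ltn_ord.
  case: eqVneq => [<-|ij]; first by rewrite mulr1n before.
  by rewrite mulr0n coefn_diag.
by rewrite sqrT2 after // leq_addr /=; lia.
Qed.

End SkewSquares.

Section Ocons.
Variable T : Type.

Definition ocons k (x : T) (f : 'I_k -> T) (i : 'I_k.+1) : T :=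
  if unlift ord0 i is Some j then f j else x.

Lemma ocons0 k x (f : 'I_k -> T) : ocons x f ord0 = x.
Proof. by rewrite /ocons unlift_none. Qed.

Lemma oconsS k x (f : 'I_k -> T) j : ocons x f (lift ord0 j) = f j.
Proof. by rewrite /ocons liftK. Qed.

Lemma big_ocons (U : Type) (idx : U) (op : U -> U -> U) (F : T -> U) k x
    (f : 'I_k -> T) :
  \big[op/idx]_(i < k.+1) F (ocons x f i) = op (F x) (\big[op/idx]_(i < k) F (f i)).
Proof. by rewrite big_ord_recl ocons0; under eq_bigr do rewrite oconsS. Qed.

End Ocons.

Section BlockForm.
Variable R : realType.

Definition normal_blocks k (m : 'I_k -> nat) (w : 'I_k -> R)
    (A : forall i, 'M[R]_((m i).*2)) : Prop :=
  [/\ forall i, (0 < m i)%N, forall i, 0 < w i, injective w &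
      forall i, skew_mx (A i) /\ special_orthogonal (A i)].

Lemma normal_formP n (J Om : 'M[R]_n) k (m : 'I_k -> nat) (w : 'I_k -> R) :
  normal_form J Om m w <->
  exists A z (e : (\sum_(i < k) (m i).*2 + z)%N = n) P,
    [/\ orthogonal_mx P, is_diag_mx (P^T *m J *m P), normal_blocks w A &
        P^T *m Om *m P = block_form w A e].
Proof.
split.
  by case=> A [z [e [P [? [? [? [? [? [? ?]]]]]]]]]; exists A, z, e, P.
by case=> A [z [e [P [? ? [? ? ? ?] ?]]]]; exists A, z, e, P.
Qed.

Lemma coefn_block_form n k (m : 'I_k -> nat) (w : 'I_k -> R)
    (A : forall i, 'M[R]_((m i).*2)) z (e : (\sum_(i < k) (m i).*2 + z)%N = n) :
  coefn (block_form w A e) =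
  bdiag (\sum_(i < k) (m i).*2) (coefn (\mxdiag_i (w i *: A i))) (fun _ _ => 0).
Proof. by rewrite /block_form coefn_castmx coefn_block_diag coefn0. Qed.

Lemma normal_blocks_nil (m : 'I_0 -> nat) (w : 'I_0 -> R)
    (A : forall i, 'M[R]_((m i).*2)) :
  normal_blocks w A.
Proof. by split=> -[]. Qed.

Lemma block_form_nil n (m : 'I_0 -> nat) (w : 'I_0 -> R)
    (A : forall i, 'M[R]_((m i).*2)) z (e : (\sum_(i < 0) (m i).*2 + z)%N = n) :
  block_form w A e = 0.
Proof. by apply: coefn_inj; rewrite coefn_block_form coefn_mxdiag0 bdiag0 coefn0. Qed.

Lemma skew_castmx p q (e : p = q) (X : 'M[R]_p) : skew_mx X -> skew_mx (castmx (e, e) X).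
Proof. by case: q / e; rewrite castmx_id. Qed.

Lemma special_orthogonal_castmx p q (e : p = q) (X : 'M[R]_p) :
  special_orthogonal X -> special_orthogonal (castmx (e, e) X).
Proof. by case: q / e; rewrite castmx_id. Qed.

Section ConsBlock.
Variables (k : nat) (m : 'I_k -> nat) (m0 : nat).
Variables (A0 : 'M[R]_m0.*2) (A : forall i, 'M[R]_((m i).*2)).

(* Going through coefficient arrays avoids a dependent match on the index i. *)
Definition mx_ocons (i : 'I_k.+1) : 'M[R]_((ocons m0 m i).*2) :=
  \matrix_(a, b) ocons (coefn A0) (fun j => coefn (A j)) i a b.

Lemma mx_ocons0 (e : m0.*2 = (ocons m0 m ord0).*2) : mx_ocons ord0 = castmx (e, e) A0.
Proof. by rewrite /mx_ocons -(mx_coefn e) [ocons (coefn A0) _ _]ocons0. Qed.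

Lemma mx_oconsS j (e : (m j).*2 = (ocons m0 m (lift ord0 j)).*2) :
  mx_ocons (lift ord0 j) = castmx (e, e) (A j).
Proof. by rewrite /mx_ocons -(mx_coefn e) [ocons (coefn A0) _ _]oconsS. Qed.

Lemma normal_blocks_cons (w : 'I_k -> R) w0 :
  normal_blocks w A -> (0 < m0)%N -> 0 < w0 -> (forall j, w j != w0) ->
  skew_mx A0 -> special_orthogonal A0 ->
  normal_blocks (ocons w0 w) mx_ocons.
Proof.
case=> m_gt0 w_gt0 w_inj normA m0_gt0 w0_gt0 w_neq skewA0 orthA0.
split=> [i|i|i j|i].
- by case: (unliftP ord0 i) => [j|] ->; rewrite ?oconsS ?ocons0.
- by case: (unliftP ord0 i) => [j|] ->; rewrite ?oconsS ?ocons0.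
- case: (unliftP ord0 i) => [i'|] ->; case: (unliftP ord0 j) => [j'|] ->;
    rewrite ?oconsS ?ocons0.
  + by move/w_inj ->.
  + by move=> wi; have := w_neq i'; rewrite wi eqxx.
  + by move=> wj; have := w_neq j'; rewrite -wj eqxx.
  + by [].
case: (unliftP ord0 i) => [j|] ->.
  have [skewA orthA] := normA j.
  rewrite (mx_oconsS (congr1 double (esym (oconsS m0 m j)))).
  by split; [apply: skew_castmx | apply: special_orthogonal_castmx].
rewrite (mx_ocons0 (congr1 double (esym (ocons0 m0 m)))).
by split; [apply: skew_castmx | apply: special_orthogonal_castmx].
Qed.

Lemma coefn_block_form_cons n n' (w : 'I_k -> R) w0 z
    (e : (\sum_(i < k) (m i).*2 + z)%N = n)
    (e' : (\sum_(i < k.+1) (ocons m0 m i).*2 + z)%N = n') :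
  coefn (block_form (ocons w0 w) mx_ocons e') =
  bdiag m0.*2 (coefn (w0 *: A0)) (coefn (block_form w A e)).
Proof.
rewrite !coefn_block_form coefn_mxdiag_recl bdiagA big_ocons.
congr bdiag; congr bdiag; first by rewrite ocons0.
  apply/funext => a; apply/funext => b.
  by rewrite !coefnZ ocons0 (mx_ocons0 (congr1 double (esym (ocons0 m0 m)))) coefn_castmx.
apply: eq_coefn_mxdiag => [i|i]; first by rewrite oconsS.
apply/funext => a; apply/funext => b.
by rewrite !coefnZ oconsS (mx_oconsS (congr1 double (esym (oconsS m0 m i)))) coefn_castmx.
Qed.

End ConsBlock.

Lemma skew_special_orthogonal_sqr p (A : 'M[R]_p) :
  skew_mx A -> special_orthogonal A -> A *m A = - 1%:M.
Proof. by move=> skewA [+ _]; rewrite /orthogonal_mx skewA mulNmx => <-; rewrite opprK. Qed.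

Lemma block_form_sqr n k (m : 'I_k -> nat) (w : 'I_k -> R)
    (A : forall i, 'M[R]_((m i).*2)) z (e : (\sum_(i < k) (m i).*2 + z)%N = n) :
  normal_blocks w A ->
  block_form w A e *m block_form w A e =
  castmx (e, e) (block_mx (\mxdiag_i (- w i ^+ 2)%:M) 0 0 (0 : 'M[R]_z)).
Proof.
case=> _ _ _ normA; rewrite castmx_block_diag_mul mxdiag_mul mulmx0.
congr (castmx _ (block_mx _ _ _ _)); apply: eq_mxdiag => i.
have [skewA orthA] := normA i.
rewrite -scalemxAl -scalemxAr scalerA skew_special_orthogonal_sqr // scalerN -expr2.
by rewrite scalemx1 raddfN.
Qed.

Lemma is_diag_block_form_sqr n k (m : 'I_k -> nat) (w : 'I_k -> R)
    (A : forall i, 'M[R]_((m i).*2)) z (e : (\sum_(i < k) (m i).*2 + z)%N = n) :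
  normal_blocks w A -> is_diag_mx (block_form w A e *m block_form w A e).
Proof.
move=> blocks; rewrite block_form_sqr //; case: n / e; rewrite castmx_id.
rewrite is_diag_block_mx // !eqxx mx0_is_diag andbT /=.
under eq_mxdiag do rewrite -diag_const_mx.
by rewrite -diag_mxrow diag_mx_is_diag.
Qed.

Definition block_dim k (m : 'I_k -> nat) (w : 'I_k -> R) (x : R) : nat :=
  \sum_(i < k) if w i == x then (m i).*2 else 0.

Lemma block_dim_at k (m : 'I_k -> nat) (w : 'I_k -> R) i :
  injective w -> block_dim m w (w i) = (m i).*2.
Proof.
move=> w_inj; rewrite /block_dim (bigD1 i) //= eqxx big1 ?addn0 // => j ji.
by case: eqP => // /w_inj ij; rewrite ij eqxx in ji.
Qed.

Lemma rank_scalar_mx p (c : R) : \rank (c%:M : 'M[R]_p) = if c == 0 then 0%N else p.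
Proof.
have [->|c_neq0] := eqVneq c 0; first by rewrite raddf0 mxrank0.
by rewrite -scalemx1 mxrank_scale_nz // mxrank1.
Qed.

Lemma rank_block_form_sqr_add n k (m : 'I_k -> nat) (w : 'I_k -> R)
    (A : forall i, 'M[R]_((m i).*2)) z (e : (\sum_(i < k) (m i).*2 + z)%N = n) x :
  normal_blocks w A -> 0 < x ->
  (\rank (block_form w A e *m block_form w A e + (x ^+ 2)%:M)%R + block_dim m w x)%N = n.
Proof.
move=> blocks x_gt0; have [_ w_gt0 _ _] := blocks.
rewrite block_form_sqr //; case: n / e; rewrite castmx_id.
rewrite [(x ^+ 2)%:M]scalar_mx_block -mxdiagZ add_block_mx !addr0 add0r -mxdiagD.
rewrite rank_diag_block_mx rank_mxdiag rank_scalar_mx sqrf_eq0 gt_eqF //.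
rewrite /block_dim addnAC -big_split; congr addn; apply: eq_bigr => i _ /=.
rewrite -raddfD rank_scalar_mx addrC subr_eq0 eqrXn2 ?ltW // eq_sym.
by case: (w i == x); rewrite ?addn0.
Qed.

Lemma skew_sqr_scalar p (T : 'M[R]_p) w :
  0 < w -> T^T = - T -> T *m T = (- w ^+ 2)%:M ->
  [/\ skew_mx (w^-1 *: T), special_orthogonal (w^-1 *: T) & ~~ odd p].
Proof.
move=> w_gt0 skewT sqrT.
have skewA : (w^-1 *: T)^T = - (w^-1 *: T) by rewrite linearZ /= skewT scalerN.
have [orthA even_p] : special_orthogonal (w^-1 *: T) /\ ~~ odd p.
  apply: skew_sqrN1 => //.
  rewrite -scalemxAl -scalemxAr scalerA sqrT scale_scalar_mx -raddfN /=.
  by congr scalar_mx; field; rewrite gt_eqF.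
by split.
Qed.

Lemma skew_sqr_sorted_block_form n (T : 'M[R]_n) :
  T^T = - T -> is_diag_mx (T *m T) ->
  (forall a b, (a <= b < n)%N -> coefn (T *m T) a a <= coefn (T *m T) b b) ->
  exists k (m : 'I_k -> nat) (w : 'I_k -> R) (A : forall i, 'M[R]_((m i).*2)) z
    (e : (\sum_(i < k) (m i).*2 + z)%N = n),
  [/\ normal_blocks w A,
      forall i, exists2 a, (a < n)%N & coefn (T *m T) a a = - w i ^+ 2 &
      T = block_form w A e].
Proof.
elim/ltn_ind: n T => n IHn T skewT diagT sortedT.
have [d0|d0] := eqVneq (coefn (T *m T) 0 0) 0.
  rewrite (skew_sqr_sorted_eq0 skewT sortedT d0).
  have e : (\sum_(i < 0) ((fun _ => 0%N) i).*2 + n)%N = n by rewrite big_ord0.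
  exists 0%N, (fun _ => 0%N), (fun _ => 0), (fun _ => 0), n, e.
  by split=> [||//]; [apply: normal_blocks_nil | case | rewrite block_form_nil].
have n_gt0 : (0 < n)%N.
  by rewrite lt0n; apply: contraNneq d0 => n0; rewrite coefn_outl ?n0.
have [r [rn [T1 [T2 [r_gt0 defT sqrT1 sqrT2 lowT2]]]]] :=
  sorted_sqr_split n_gt0 diagT sortedT.
have [skewT1 skewT2] : T1^T = - T1 /\ T2^T = - T2.
  by apply: (skew_castmx_block_diag (e := subnKC rn)); rewrite -defT.
have diagT2 : is_diag_mx (T2 *m T2).
  apply/is_diag_mxP => i j ij; rewrite -coefnE sqrT2 coefn_diag //.
  by rewrite eqn_add2l.
have sortedT2 a b : (a <= b < n - r)%N -> coefn (T2 *m T2) a a <= coefn (T2 *m T2) b b.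
  by move=> ab; rewrite !sqrT2 sortedT //; lia.
have [k [m [w [A [z [e [blocks wT2 defT2]]]]]]] :=
  IHn (n - r)%N ltac:(lia) T2 skewT2 diagT2 sortedT2.
pose c := - coefn (T *m T) 0 0.
have c_gt0 : 0 < c by rewrite oppr_gt0 lt_neqAle d0 skew_sqr_coefn_le0.
pose w0 := Num.sqrt c.
have w0_gt0 : 0 < w0 by rewrite sqrtr_gt0.
have w0_sqr : w0 ^+ 2 = c by rewrite sqr_sqrtr // ltW.
have [skewA1 orthA1 even_r] : [/\ skew_mx (w0^-1 *: T1),
    special_orthogonal (w0^-1 *: T1) & ~~ odd r].
  by apply: skew_sqr_scalar; rewrite // sqrT1 w0_sqr opprK.
have er : r = (r./2).*2 by rewrite even_halfK.
have e' : (\sum_(i < k.+1) (ocons r./2 m i).*2 + z)%N = n.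
  by rewrite big_ocons -er -addnA e subnKC.
exists k.+1, (ocons r./2 m), (ocons w0 w), (mx_ocons (castmx (er, er) (w0^-1 *: T1)) A), z, e'.
split.
- apply: normal_blocks_cons => //.
  + by rewrite -double_gt0 -er.
  + move=> j; apply/eqP => wj; have [a an] := wT2 j.
    by rewrite wj w0_sqr => T2a; have := lowT2 a an; rewrite T2a /c opprK ltxx.
  + by apply: skew_castmx.
  + by apply: special_orthogonal_castmx.
- move=> i; case: (unliftP ord0 i) => [j|] ->.
    have [a an wa] := wT2 j; exists (r + a)%N; first lia.
    by rewrite oconsS -sqrT2.
  by exists 0%N; rewrite ?ocons0 ?w0_sqr ?opprK // (leq_trans r_gt0 rn).
apply: coefn_inj; rewrite (coefn_block_form_cons _ _ _ _ e) -defT2.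
rewrite {1}defT coefn_castmx coefn_block_diag; congr bdiag; first exact: er.
apply/funext => a; apply/funext => b.
by rewrite coefnZ coefn_castmx coefnZ mulrA mulfV ?mul1r // gt_eqF.
Qed.

End BlockForm.

Section RealClosedLinearAlgebra.
Variable R : rcfType.

Lemma perm_mx_conj n (s : 'S_n) (Y : 'M[R]_n) :
  (perm_mx s^-1)^T *m Y *m perm_mx s^-1 = \matrix_(i, j) Y (s i) (s j).
Proof.
rewrite tr_perm_mx invgK -row_permE -col_permE.
by apply/matrixP => i j; rewrite !mxE.
Qed.

Lemma is_diag_mx_perm n (s : 'S_n) (Y : 'M[R]_n) :
  is_diag_mx Y -> is_diag_mx (\matrix_(i, j) Y (s i) (s j)).
Proof.
move=> /is_diag_mxP diagY; apply/is_diag_mxP => i j ij.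
by rewrite mxE diagY //; apply: contra_neq ij => /val_inj/perm_inj ->.
Qed.

Lemma sorting_perm n (f : 'I_n -> R) :
  exists s : 'S_n, forall a b : 'I_n, (a <= b)%N -> f (s a) <= f (s b).
Proof.
case: n f => [|n] f; first by exists 1%g => -[].
pose le_f := fun i j : 'I_n.+1 => f i <= f j.
pose t := sort le_f (enum 'I_n.+1).
have size_t : size t = n.+1 by rewrite size_sort size_enum_ord.
have t_inj : injective (fun a : 'I_n.+1 => nth ord0 t a).
  move=> a b /eqP; rewrite nth_uniq ?size_t ?sort_uniq ?enum_uniq // => /eqP.
  exact: val_inj.
have sorted_t : sorted le_f t by apply: sort_sorted => x y; apply: le_total.
have le_f_trans : transitive le_f by move=> x y z; apply: le_trans.
exists (perm t_inj) => a b ab; rewrite !permE.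
by apply: (sorted_leq_nth le_f_trans (fun x => lexx (f x)) ord0 sorted_t);
  rewrite ?inE ?size_t.
Qed.

Lemma symmetric_eigenvectors_orthogonal n (J : 'M[R]_n) (u v : 'rV[R]_n) a b :
  J^T = J -> u *m J = a *: u -> v *m J = b *: v -> a != b -> u *m v^T = 0.
Proof.
move=> symJ uJ vJ ab.
have : u *m J *m v^T = b *: (u *m v^T).
  by rewrite -mulmxA -[J]symJ -trmx_mul vJ linearZ /= -scalemxAr.
rewrite uJ -scalemxAl => /eqP; rewrite -subr_eq0 -scalerBl scalemx_eq0 subr_eq0.
by rewrite (negbTE ab) => /eqP.
Qed.

Lemma rV_normalize n (v : 'rV[R]_n) :
  v != 0 -> exists c : R, ((c *: v) *m (c *: v)^T) 0 0 = 1.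
Proof.
move=> v_neq0; pose s := (v *m v^T) 0 0.
have sE : s = \sum_l v 0 l ^+ 2.
  by rewrite /s mxE; apply: eq_bigr => l _; rewrite mxE expr2.
have s_gt0 : 0 < s.
  rewrite lt_def sE sumr_ge0 => [|l _]; last exact: sqr_ge0.
  rewrite andbT; apply: contra v_neq0 => /eqP/psumr_eq0P sum0.
  apply/eqP/rowP => l; rewrite mxE; apply/eqP.
  by rewrite -sqrf_eq0 sum0 // => j _; apply: sqr_ge0.
exists (Num.sqrt s)^-1.
rewrite linearZ /= -scalemxAl -scalemxAr scalerA mxE -/s -expr2 exprVn.
by rewrite sqr_sqrtr ?ltW // mulVf // gt_eqF.
Qed.

Lemma rows_conj_entry n (u : 'I_n -> 'rV[R]_n) (X : 'M[R]_n) i j :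
  ((\matrix_(k < n) u k) *m X *m (\matrix_(k < n) u k)^T) i j = (u i *m X *m (u j)^T) 0 0.
Proof.
rewrite !mxE; apply: eq_bigr => b _; rewrite !mxE; congr (_ * _).
by apply: eq_bigr => a _; rewrite !mxE.
Qed.

End RealClosedLinearAlgebra.

Section EulerArnold.
Variable R : realType.

Lemma lie_bracket_euler_arnold n (J M Om : 'M[R]_n) :
  Om *m J + J *m Om = M -> lie_bracket M Om = J *m (Om *m Om) - (Om *m Om) *m J.
Proof.
move=> <-; rewrite /lie_bracket mulmxDl mulmxDr !mulmxA.
by rewrite [X in X - _]addrC [X in _ - X]addrC addrKA.
Qed.

Lemma orthogonal_conjM n (P X Y : 'M[R]_n) : orthogonal_mx P ->
  P^T *m (X *m Y) *m P = (P^T *m X *m P) *m (P^T *m Y *m P).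
Proof.
move=> /mulmx1C PPT.
by rewrite !mulmxA -[P^T *m X *m P *m P^T]mulmxA PPT mulmx1.
Qed.

Lemma orthogonal_conj_inj n (P : 'M[R]_n) :
  orthogonal_mx P -> injective (fun X => P^T *m X *m P).
Proof.
move=> /mulmx1C PPT X Y /= XY.
have conjK Z : P *m (P^T *m Z *m P) *m P^T = Z.
  by rewrite !mulmxA PPT mul1mx -mulmxA PPT mulmx1.
by rewrite -(conjK X) XY conjK.
Qed.

Lemma orthogonal_mxM n (P Q : 'M[R]_n) :
  orthogonal_mx P -> orthogonal_mx Q -> orthogonal_mx (P *m Q).
Proof.
rewrite /orthogonal_mx => PTP QTQ.
by rewrite trmx_mul mulmxA -[Q^T *m P^T *m P]mulmxA PTP mulmx1.
Qed.

Lemma orthogonal_perm_mx n (s : 'S_n) : orthogonal_mx (perm_mx s : 'M[R]_n).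
Proof. by rewrite /orthogonal_mx tr_perm_mx -perm_mxM mulVg perm_mx1. Qed.

Lemma symmetric_distinct_eigenbasis n (J : 'M[R]_n) :
  symmetric_mx J -> distinct_eigenvalues J ->
  exists P : 'M[R]_n, [/\ orthogonal_mx P, is_diag_mx (P^T *m J *m P) &
    forall i j, i != j -> (P^T *m J *m P) i i != (P^T *m J *m P) j j].
Proof.
move=> symJ [d [d_inj eigd]].
have [u uP] : exists u : 'I_n -> 'rV[R]_n,
    forall i, u i *m J = d i *: u i /\ (u i *m (u i)^T) 0 0 = 1.
  apply: (fin_all_exists (P := fun i u => u *m J = d i *: u /\ (u *m u^T) 0 0 = 1)) => i.
  have /eigenvalueP[v vJ v_neq0] := eigd i.
  have [c cv] := rV_normalize v_neq0.
  by exists (c *: v); rewrite -scalemxAl vJ scalerA mulrC -scalerA.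
have uu i j : (u i *m (u j)^T) 0 0 = (i == j)%:R.
  have [<-|ij] := eqVneq i j; first by rewrite (proj2 (uP i)).
  rewrite (symmetric_eigenvectors_orthogonal symJ (proj1 (uP i)) (proj1 (uP j))).
    by rewrite mxE.
  by apply: contra_neq ij => /d_inj.
pose P := (\matrix_(k < n) u k)^T.
have PJP i j : (P^T *m J *m P) i j = d i * (i == j)%:R.
  by rewrite trmxK rows_conj_entry (proj1 (uP i)) -scalemxAl mxE uu.
exists P; split.
- apply/matrixP => i j; rewrite -[P^T]mulmx1 trmxK rows_conj_entry mulmx1 uu mxE.
  by case: eqP.
- by apply/is_diag_mxP => i j ij; rewrite PJP -val_eqE (negbTE ij) mulr0.
by move=> i j ij; rewrite !PJP !eqxx !mulr1; apply: contra_neq ij => /d_inj.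
Qed.

Lemma commute_normal_form n (J Om : 'M[R]_n) :
  symmetric_mx J -> distinct_eigenvalues J -> skew_mx Om ->
  J *m (Om *m Om) = (Om *m Om) *m J ->
  exists k (m : 'I_k -> nat) (w : 'I_k -> R), normal_form J Om m w.
Proof.
move=> symJ distJ; rewrite /skew_mx => skewOm commJ.
have [P0 [orthP0 diagJ0 distJ0]] := symmetric_distinct_eigenbasis symJ distJ.
pose S0 := P0^T *m (Om *m Om) *m P0.
have diagS0 : is_diag_mx S0.
  by apply: commute_diag_distinct diagJ0 distJ0 _; rewrite -!orthogonal_conjM // commJ.
have [s sorted_s] := sorting_perm (fun i => S0 i i).
pose P := P0 *m perm_mx s^-1.
have orthP : orthogonal_mx P by apply: orthogonal_mxM => //; apply: orthogonal_perm_mx.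
have conjP X : P^T *m X *m P = \matrix_(i, j) (P0^T *m X *m P0) (s i) (s j).
  by rewrite -perm_mx_conj /P trmx_mul !mulmxA.
pose T := P^T *m Om *m P.
have skewT : T^T = - T by rewrite /T /P !trmx_mul !trmxK skewOm mulNmx mulmxN !mulmxA.
have sqrT : T *m T = \matrix_(i, j) S0 (s i) (s j) by rewrite -orthogonal_conjM // conjP.
have diagT : is_diag_mx (T *m T) by rewrite sqrT is_diag_mx_perm.
have sortedT a b : (a <= b < n)%N -> coefn (T *m T) a a <= coefn (T *m T) b b.
  case/andP=> ab bn; have an := leq_ltn_trans ab bn.
  rewrite (_ : a = Ordinal an) // (_ : b = Ordinal bn) // !coefnE sqrT.
  by move: (sorted_s (Ordinal an) (Ordinal bn) ab); rewrite !mxE.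
have [k [m [w [A [z [e [blocks _ defT]]]]]]] :=
  skew_sqr_sorted_block_form skewT diagT sortedT.
exists k, m, w; apply/normal_formP; exists A, z, e, P; split=> //.
by rewrite conjP is_diag_mx_perm.
Qed.

Lemma normal_form_commute n (J Om : 'M[R]_n) k (m : 'I_k -> nat) (w : 'I_k -> R) :
  normal_form J Om m w -> J *m (Om *m Om) = (Om *m Om) *m J.
Proof.
case/normal_formP=> A [z [e [P [orthP diagJ blocks defOm]]]].
apply: (orthogonal_conj_inj orthP); rewrite /= !orthogonal_conjM // defOm.
by apply: diag_mx_commute; last exact: is_diag_block_form_sqr.
Qed.

Lemma normal_form_rank n (J Om : 'M[R]_n) k (m : 'I_k -> nat) (w : 'I_k -> R) x :
  normal_form J Om m w -> 0 < x ->
  (\rank (Om *m Om + (x ^+ 2)%:M)%R + block_dim m w x)%N = n.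
Proof.
case/normal_formP=> A [z [e [P [orthP _ blocks defOm]]]] x_gt0.
have [_ P_unit] := mulmx1_unit orthP.
have rank_conj Y : \rank (P^T *m Y *m P) = \rank Y.
  rewrite mxrankMfree ?row_free_unit // -mxrank_tr trmx_mul.
  by rewrite mxrankMfree ?row_free_unit ?unitmx_tr // mxrank_tr.
rewrite -rank_conj mulmxDr mulmxDl orthogonal_conjM // defOm.
rewrite mul_mx_scalar -scalemxAl orthP scalemx1.
exact: rank_block_form_sqr_add.
Qed.

(* Each block size is read off from the rank of Om^2 + w_i^2, a basis-free quantity. *)
Lemma normal_form_match n (J Om : 'M[R]_n)
    k (m : 'I_k -> nat) (w : 'I_k -> R) k' (m' : 'I_k' -> nat) (w' : 'I_k' -> R) :
  normal_form J Om m w -> normal_form J Om m' w' ->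
  exists sigma : 'I_k -> 'I_k', forall i, m' (sigma i) = m i /\ w' (sigma i) = w i.
Proof.
move=> nf nf'; have /normal_formP[_ [_ [_ [_ [_ _ [m_gt0 w_gt0 w_inj _] _]]]]] := nf.
have /normal_formP[_ [_ [_ [_ [_ _ [_ _ w'_inj _] _]]]]] := nf'.
apply: (fin_all_exists (P := fun i j => m' j = m i /\ w' j = w i)) => i.
have dim' : block_dim m' w' (w i) = (m i).*2.
  apply/eqP; rewrite -(eqn_add2l (\rank (Om *m Om + (w i ^+ 2)%:M)%R)).
  by rewrite (normal_form_rank nf' (w_gt0 i)) -(block_dim_at m i w_inj) (normal_form_rank nf (w_gt0 i)).
case: (pickP (fun j => w' j == w i)) => [j /eqP w'j|none].
  by exists j; split=> //; apply: double_inj; rewrite -dim' -w'j block_dim_at.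
move: dim'; rewrite /block_dim big1 => [/esym/eqP|j _]; last by rewrite none.
by rewrite double_eq0 (gtn_eqF (m_gt0 i)).
Qed.

Lemma normal_form_unique n (J Om : 'M[R]_n)
    k (m : 'I_k -> nat) (w : 'I_k -> R) k' (m' : 'I_k' -> nat) (w' : 'I_k' -> R) :
  normal_form J Om m w -> normal_form J Om m' w' ->
  exists sigma : 'I_k -> 'I_k',
    bijective sigma /\ forall i, m' (sigma i) = m i /\ w' (sigma i) = w i.
Proof.
move=> nf nf'.
have [sigma sigmaP] := normal_form_match nf nf'.
have [tau tauP] := normal_form_match nf' nf.
have /normal_formP[_ [_ [_ [_ [_ _ [_ _ w_inj _] _]]]]] := nf.
have /normal_formP[_ [_ [_ [_ [_ _ [_ _ w'_inj _] _]]]]] := nf'.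
exists sigma; split=> //; exists tau => [i|j].
  by apply: w_inj; rewrite (proj2 (tauP _)) (proj2 (sigmaP _)).
by apply: w'_inj; rewrite (proj2 (sigmaP _)) (proj2 (tauP _)).
Qed.

End EulerArnold.

Theorem theorem1 (R : realType) (n : nat) (J M Om : 'M[R]_n) :
  symmetric_mx J -> distinct_eigenvalues J ->
  skew_mx M -> skew_mx Om -> Om *m J + J *m Om = M ->
  (lie_bracket M Om = 0 <->
     exists (k : nat) (m : 'I_k -> nat) (w : 'I_k -> R), normal_form J Om m w)
  /\
  (forall (k : nat) (m : 'I_k -> nat) (w : 'I_k -> R)
          (k' : nat) (m' : 'I_k' -> nat) (w' : 'I_k' -> R),
      normal_form J Om m w -> normal_form J Om m' w' ->
      exists sigma : 'I_k -> 'I_k',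
        bijective sigma /\ forall i, m' (sigma i) = m i /\ w' (sigma i) = w i).
Proof.
move=> symJ distJ _ skewOm defM; split; last exact: normal_form_unique.
rewrite (lie_bracket_euler_arnold defM); split=> [/eqP|[k [m [w nf]]]].
  by rewrite subr_eq0 => /eqP; apply: commute_normal_form.
by rewrite (normal_form_commute nf) subrr.
Qed.
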